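(* Let $\alpha>0$, let $K\subseteq\mathbb{R}^d$ be a closed convex cone and $P\in\mathbb{R}^{d\times d}$ non-singular, and set $K'=PK=\{Px:x\in K\}$. Let $\mathcal{A}=\{y\in\mathbb{R}^d: x^Ty\le\|Px\|\,\alpha\ \text{for all }x\in K\}$ and $\mathcal{B}=P^T\big(\{\tilde{y}\in\mathbb{R}^d:\|p_{K'}(\tilde{y})\|\le\alpha\}\big)=\{P^T\tilde{y}:\|p_{K'}(\tilde{y})\|\le\alpha\}$. Then $\mathcal{A}=\mathcal{B}$.
   Context: $\|\cdot\|$ is the Euclidean norm. For a closed convex set $C\subset\mathbb{R}^d$ and $y\in\mathbb{R}^d$, the projection $p_C(y)$ is the unique point of $C$ with $\|p_C(y)-y\|=\inf_{x\in C}\|x-y\|$. *)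

From HB Require Import structures.
From mathcomp Require Import all_boot all_order all_algebra.
From mathcomp Require Import all_classical all_reals all_analysis.
Set Implicit Arguments. Unset Strict Implicit. Unset Printing Implicit Defensive.
Import Order.TTheory GRing.Theory Num.Theory.
Import numFieldNormedType.Exports.
Local Open Scope ring_scope.
Local Open Scope classical_set_scope.

Definition enorm (R : realType) (d : nat) (x : 'cV[R]_d) : R :=
  Num.sqrt (\sum_(i < d) x i 0 ^+ 2).

Definition is_convex_cone (R : realType) (d : nat) (K : set 'cV[R]_d) : Prop :=
  K 0 /\ forall (x y : 'cV[R]_d) (a b : R), K x -> K y -> 0 <= a -> 0 <= b ->
    K (a *: x + b *: y).

Definition is_proj (R : realType) (d : nat) (C : set 'cV[R]_d) (y p : 'cV[R]_d)
  : Prop := C p /\ forall x, C x -> enorm (p - y) <= enorm (x - y).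

From HB Require Import structures.
From mathcomp Require Import all_boot all_order all_algebra.
From mathcomp Require Import all_classical all_reals all_analysis.
From mathcomp Require Import ring lra.
Set Implicit Arguments. Unset Strict Implicit. Unset Printing Implicit Defensive.
Import Order.TTheory GRing.Theory Num.Theory.
Import numFieldNormedType.Exports.
Local Open Scope ring_scope.
Local Open Scope classical_set_scope.

(** The projection [p] of [yt] onto a closed convex cone satisfies
   [z . (yt - p) <= 0] for every [z] in the cone and [p . (yt - p) = 0].
   Hence [z . yt <= z . p <= |z| |p|] on the cone, while [p . yt = |p|^2];
   so [z . yt <= alpha |z|] holds on the cone exactly when [|p| <= alpha].
   Writing [y = P^T yt], we have [x . y = (P x) . yt], which transports this
   characterisation from [K' = P K] back to [K]. *)

Section continuity.
Variable R : realType.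

Lemma continuous_sum (T : topologicalType) (I : Type) (s : seq I)
    (f : I -> T -> R) :
  (forall i, continuous (f i)) -> continuous (fun x => \sum_(i <- s) f i x).
Proof.
move=> fc; elim: s => [|a s IHs].
  by under eq_fun do rewrite big_nil; exact: cst_continuous.
under eq_fun do rewrite big_cons.
by move=> x; apply: continuousD; [exact: fc | exact: IHs].
Qed.

Lemma continuous_mx (T : topologicalType) m n (g : T -> 'M[R]_(m, n)) :
  (forall i j, continuous (fun t => g t i j)) -> continuous g.
Proof.
move=> gc t; apply/cvg_ballP => e e0.
have : \forall s \near t, forall i j, ball (g t i j) e (g s i j).
  apply: filter_forall => i; apply: filter_forall => j.
  by move: (gc i j t) => /cvg_ballP; apply.
by apply: filterS => s gs; split.
Qed.

Lemma continuous_mulmx m n p (A : 'M[R]_(m, n)) :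
  continuous (fun B : 'M[R]_(n, p) => A *m B).
Proof.
apply: continuous_mx => i j; under eq_fun do rewrite mxE.
apply: continuous_sum => k B.
exact: (@continuousM R _ (fun=> A i k) (fun B : 'M[R]_(n, p) => B k j) B
  (@cst_continuous _ _ (A i k) B) (@coord_continuous R n p k j B)).
Qed.

End continuity.

Section inner_product.
Variables (R : realType) (d : nat).
Implicit Types (u v w : 'cV[R]_d) (a b : R).

Definition dot u v : R := (u^T *m v) 0 0.

Lemma dotE u v : dot u v = \sum_i u i 0 * v i 0.
Proof. by rewrite /dot mxE; apply: eq_bigr => i _; rewrite mxE. Qed.

Lemma dotC u v : dot u v = dot v u.
Proof. by rewrite !dotE; apply: eq_bigr => i _; rewrite mulrC. Qed.

Lemma dotDr u v w : dot u (v + w) = dot u v + dot u w.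
Proof. by rewrite /dot mulmxDr mxE. Qed.

Lemma dotNr u v : dot u (- v) = - dot u v.
Proof. by rewrite /dot mulmxN mxE. Qed.

Lemma dotNl u v : dot (- u) v = - dot u v.
Proof. by rewrite dotC dotNr dotC. Qed.

Lemma dot_sqr_comb u v a b : dot (a *: u + b *: v) (a *: u + b *: v) =
  a ^+ 2 * dot u u + 2 * a * b * dot u v + b ^+ 2 * dot v v.
Proof.
rewrite !dotE !mulr_sumr -!big_split /=; apply: eq_bigr => i _; rewrite !mxE; ring.
Qed.

Lemma dot_ge0 u : 0 <= dot u u.
Proof. by rewrite dotE; apply: sumr_ge0 => i _; rewrite -expr2 sqr_ge0. Qed.

Lemma sqr_coord_le_dot u i : u i 0 ^+ 2 <= dot u u.
Proof.
rewrite dotE (bigD1 i) //= -expr2 lerDl.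
by apply: sumr_ge0 => j _; rewrite -expr2 sqr_ge0.
Qed.

Lemma dot_eq0 u : (dot u u == 0) = (u == 0).
Proof.
apply/idP/eqP => [|->]; last by rewrite /dot mulmx0 mxE.
rewrite dotE psumr_eq0 => [/allP u0|i _]; last by rewrite -expr2 sqr_ge0.
apply/matrixP => i j; rewrite ord1 mxE.
by have := u0 i (mem_index_enum i); rewrite -expr2 sqrf_eq0 => /eqP.
Qed.

Lemma enormE u : enorm u = Num.sqrt (dot u u).
Proof. by rewrite /enorm dotE; congr Num.sqrt; apply: eq_bigr => i _; rewrite expr2. Qed.

Lemma enorm_ge0 u : 0 <= enorm u.
Proof. exact: sqrtr_ge0. Qed.

Lemma sqr_enorm u : enorm u ^+ 2 = dot u u.
Proof. by rewrite enormE sqr_sqrtr ?dot_ge0. Qed.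

Lemma ler_enorm u v : (enorm u <= enorm v) = (dot u u <= dot v v).
Proof. by rewrite !enormE ler_sqrt ?dot_ge0. Qed.

Lemma dot_le_enorm u v : dot u v <= enorm u * enorm v.
Proof.
have [->|u0] := eqVneq u 0; first by rewrite /dot trmx0 mul0mx mxE mulr_ge0 ?enorm_ge0.
have [->|v0] := eqVneq v 0; first by rewrite /dot mulmx0 mxE mulr_ge0 ?enorm_ge0.
have nu : 0 < enorm u by rewrite enormE sqrtr_gt0 lt0r dot_eq0 u0 dot_ge0.
have nv : 0 < enorm v by rewrite enormE sqrtr_gt0 lt0r dot_eq0 v0 dot_ge0.
have := dot_ge0 (enorm v *: u + (- enorm u) *: v).
rewrite dot_sqr_comb -!sqr_enorm.
have : 0 < enorm u * enorm v by rewrite mulr_gt0.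
nra.
Qed.

End inner_product.

Lemma dot_trmxr (R : realType) m n (A : 'M[R]_(m, n)) u v :
  dot u (A^T *m v) = dot (A *m u) v.
Proof. by rewrite /dot trmx_mul mulmxA. Qed.

Section projection.
Variables (R : realType) (d : nat).
Implicit Types (C : set 'cV[R]_d) (y p w z : 'cV[R]_d).

(* Points outside the box of radius [r] around [y] are farther from [y] than
   [c], so it suffices to minimise over the compact set [box `&` C]; boxes are
   known to be compact for row vectors, hence the transposes. *)
Lemma proj_exists C y c : closed C -> C c -> exists p, is_proj C y p.
Proof.
move=> Ccl Cc; pose r := dot (c - y) (c - y) + 1.
have r1 : 1 <= r by rewrite lerDr dot_ge0.
pose box := [set v : 'rV[R]_d | forall i,
  `[y i 0 - r, y i 0 + r]%classic (v ord0 i)].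
have box_compact : compact box.
  by have := rV_compact (fun i => @segment_compact R (y i 0 - r) (y i 0 + r)).
pose Ct := (fun v : 'rV[R]_d => v^T) @^-1` C.
have Ct_closed : closed Ct.
  apply: preimage_closed => // v _; apply: continuous_mx => i j.
  by under eq_fun do rewrite mxE; exact: coord_continuous.
pose f (v : 'rV[R]_d) := dot (v^T - y) (v^T - y).
have f_cont : continuous f.
  move=> v; rewrite /f; under eq_fun do rewrite dotE.
  apply: continuous_sum => i; under eq_fun do rewrite !mxE.
  have yi : continuous (fun x : 'rV[R]_d => x 0 i - y i 0).
    by move=> x; apply: continuousB; [exact: coord_continuous|exact: cst_continuous].
  by move=> x; exact: (continuousM (yi x) (yi x)).
have far z i : r < `|z i 0 - y i 0| -> dot (c - y) (c - y) < dot (z - y) (z - y).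
  move=> ri; have rD : dot (c - y) (c - y) < r by rewrite ltrDl.
  have := sqr_coord_le_dot (z - y) i; rewrite !mxE -real_normK ?num_real //.
  by have := normr_ge0 (z i 0 - y i 0); nra.
have Sc : (box `&` Ct) c^T.
  split; last by rewrite /Ct /= trmxK.
  move=> i /=; rewrite mxE in_itv /= -ler_distl leNgt; apply/negP => /far.
  by rewrite ltxx.
have [q /set_mem [_ Cq] qmin] :=
  compact_EVT_min (ex_intro _ _ Sc) (compact_closedI box_compact Ct_closed)
    (continuous_subspaceT f_cont).
exists q^T; split => // x Cx; rewrite ler_enorm.
have [bx|/existsNP[i]] := pselect (box x^T).
  by have := qmin x^T (mem_set (conj bx (_ : Ct x^T))); rewrite /f /Ct /= !trmxK; apply.
rewrite /= mxE in_itv /= -ler_distl => /negP; rewrite -ltNge => /far xfar.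
apply: le_trans (ltW xfar).
by have := qmin c^T (mem_set Sc); rewrite /f trmxK.
Qed.

Lemma ge0_of_ge0_affine (a b : R) :
  (forall t, 0 < t -> t <= 1 -> 0 <= a + t * b) -> 0 <= a.
Proof.
move=> H; rewrite leNgt; apply/negP => a0.
have den : 0 < `|b| - a by rewrite subr_gt0 (lt_le_trans a0).
pose t := - a / (`|b| - a).
have t0 : 0 < t by rewrite divr_gt0 // oppr_gt0.
have t1 : t <= 1 by rewrite ler_pdivrMr // mul1r lerDr.
have tE : t * (`|b| - a) = - a by rewrite divfK ?gt_eqF.
by have := H t t0 t1; have := ler_norm b; nra.
Qed.

Lemma proj_dir_le0 C y p w : is_proj C y p ->
  (forall t, 0 < t -> t <= 1 -> C (p + t *: w)) -> dot w (y - p) <= 0.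
Proof.
move=> [_ pmin] Cw; rewrite -oppr_ge0 -dotNr opprB dotC.
apply: (@ge0_of_ge0_affine _ (dot w w / 2)) => t t0 t1.
have := pmin _ (Cw t t0 t1); rewrite ler_enorm.
have -> : p + t *: w - y = 1 *: (p - y) + t *: w.
  by rewrite scale1r addrAC.
by rewrite dot_sqr_comb expr1n !mul1r; nra.
Qed.

Section convex_cone.
Variables (C : set 'cV[R]_d) (y p : 'cV[R]_d).
Hypotheses (C_cone : is_convex_cone C) (Cproj : is_proj C y p).

Lemma proj_cone_le0 z : C z -> dot z (y - p) <= 0.
Proof.
move=> Cz; apply: proj_dir_le0 Cproj _ => t t0 _.
by rewrite -[p]scale1r; apply: C_cone.2 => //; [case: Cproj | exact: ltW].
Qed.

Lemma proj_cone_orth : dot p (y - p) = 0.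
Proof.
have Cp := Cproj.1.
apply/eqP; rewrite eq_le proj_cone_le0 //= -oppr_le0 -dotNl.
apply: proj_dir_le0 Cproj _ => t _ t1.
have -> : p + t *: - p = (1 - t) *: p + 0 *: p.
  by rewrite scale0r addr0 scalerBl scale1r scalerN.
by apply: C_cone.2 => //; rewrite subr_ge0.
Qed.

Lemma proj_cone_polar_ball alpha : 0 <= alpha ->
  (forall z, C z -> dot z y <= enorm z * alpha) <-> enorm p <= alpha.
Proof.
move=> alpha0; have pyE : dot p y = enorm p ^+ 2.
  by rewrite sqr_enorm -[y](subrK p) dotDr addrC proj_cone_orth addr0.
split => [/(_ p Cproj.1) | palpha z Cz].
  by rewrite pyE; have := enorm_ge0 p; nra.
rewrite -[y](subrK p) dotDr.
have := proj_cone_le0 Cz; have := dot_le_enorm z p.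
by have := enorm_ge0 z; nra.
Qed.

End convex_cone.

End projection.

Section linear_image.
Variables (R : realType) (m n : nat).

Lemma is_convex_cone_image (A : 'M[R]_(m, n)) K :
  is_convex_cone K -> is_convex_cone [set A *m x | x in K].
Proof.
case=> K0 Kcomb; split; first by exists 0 => //; rewrite mulmx0.
move=> _ _ a b [x Kx <-] [z Kz <-] a0 b0; exists (a *: x + b *: z).
  exact: Kcomb.
by rewrite mulmxDr !scalemxAr.
Qed.

Lemma closed_image_unitmx (P : 'M[R]_n) (K : set 'cV[R]_n) :
  P \in unitmx -> closed K -> closed [set P *m x | x in K].
Proof.
move=> Pu Kcl; have -> : [set P *m x | x in K] = (fun z => invmx P *m z) @^-1` K.
  apply/seteqP; split => [_ [x Kx <-] | z Kz] /=; first by rewrite mulKmx.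
  by exists (invmx P *m z); rewrite ?mulKVmx.
by apply: preimage_closed Kcl => z _; exact: continuous_mulmx.
Qed.

End linear_image.

Theorem mainTheorem17 (R : realType) (d : nat) (alpha : R)
  (K : set 'cV[R]_d) (P : 'M[R]_d) :
  0 < alpha -> closed K -> is_convex_cone K -> P \in unitmx ->
  let K' := [set P *m x | x in K] in
  [set y : 'cV[R]_d | forall x, K x -> (x^T *m y) 0 0 <= enorm (P *m x) * alpha]
  = [set P^T *m yt | yt in
       [set yt : 'cV[R]_d | exists p, is_proj K' yt p /\ enorm p <= alpha]].
Proof.
move=> alpha0 Kcl Kcone Pu K'.
have K'cone : is_convex_cone K' := is_convex_cone_image P Kcone.
have K'proj yt : exists p, is_proj K' yt p.
  exact: proj_exists (closed_image_unitmx Pu Kcl) K'cone.1.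
have polarE yt : (forall x, K x -> dot x (P^T *m yt) <= enorm (P *m x) * alpha)
    <-> (forall z, K' z -> dot z yt <= enorm z * alpha).
  split=> [H _ [x Kx <-] | H x Kx].
    by rewrite -dot_trmxr; exact: H.
  by rewrite dot_trmxr; apply: H; exists x.
apply/seteqP; split => [y /= Hy | _ [yt [p [pr palpha]] <-] /=].
- have yE : y = P^T *m ((invmx P)^T *m y).
    by rewrite mulmxA -trmx_mul mulVmx // trmx1 mul1mx.
  exists ((invmx P)^T *m y) => //; have [p pr] := K'proj ((invmx P)^T *m y).
  exists p; split => //; apply/(proj_cone_polar_ball K'cone pr (ltW alpha0)).
  by apply/polarE; rewrite -yE.
- by apply/polarE/(proj_cone_polar_ball K'cone pr (ltW alpha0)).
Qed.
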